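(* Let $K\ge2$. Then for all $x,y\in\mathbb{R}^K$, $\|\mathrm{softmax}(x)-\mathrm{softmax}(y)\|_2\le L_K\|x-y\|_2$ with a constant $L_K\le\frac{K-1}{K}$.
   Context: $\mathrm{softmax}:\mathbb{R}^K\to\mathbb{R}^K$, $\{\mathrm{softmax}(x)\}_i=e^{x_i}/\sum_{j=1}^Ke^{x_j}$; $\|\cdot\|_2$ is the Euclidean norm. *)

From HB Require Import structures.
From mathcomp Require Import all_boot all_order all_algebra.
From mathcomp Require Import reals.
From mathcomp Require Import sequences exp.
Set Implicit Arguments. Unset Strict Implicit. Unset Printing Implicit Defensive.
Import Order.TTheory GRing.Theory Num.Theory.
Local Open Scope ring_scope.

Definition softmax (R : realType) (K : nat) (x : 'rV[R]_K) : 'rV[R]_K :=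
  \row_(i < K) (expR (x 0 i) / \sum_(j < K) expR (x 0 j)).

Definition norm2 (R : realType) (K : nat) (x : 'rV[R]_K) : R :=
  Num.sqrt (\sum_(i < K) (x 0 i) ^+ 2).

From HB Require Import structures.
From mathcomp Require Import all_boot all_order all_algebra.
From mathcomp Require Import reals.
From mathcomp Require Import sequences exp.
From mathcomp Require Import boolp classical_sets functions.
From mathcomp Require Import topology normedtype derive realfun.
From mathcomp Require Import ring lra.

(* The Lipschitz constant is 1/2. Put v = softmax x - softmax y and d = x - y.
   Along the segment s |-> y + s d, the derivative of <v, softmax(y + s d)> is the
   covariance of v and d under the probability vector p = softmax(y + s d), so the
   mean value theorem gives |v|^2 = Cov_p(v, d) at some point of the segment.
   Writing the covariance as (1/2) sum_ij p_i p_j (v_i - v_j)(d_i - d_j) and using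
   AM-GM termwise together with p_i (1 - p_i) <= 1/4 yields
   Cov_p(v, d) <= |v| |d| / 2, hence |v| <= |d| / 2 <= (K - 1)/K |d|. *)

Set Implicit Arguments.
Unset Strict Implicit.
Unset Printing Implicit Defensive.

Import Order.TTheory GRing.Theory Num.Theory.
Import numFieldNormedType.Exports.
Local Open Scope ring_scope.
Local Open Scope classical_set_scope.

Section Covariance.
Variables (R : realFieldType) (I : finType) (p : I -> R).
Hypothesis p_ge0 : forall i, 0 <= p i.
Hypothesis p_sum1 : \sum_i p i = 1.

Definition covariance (u w : I -> R) : R :=
  \sum_i p i * u i * w i - (\sum_i p i * u i) * (\sum_i p i * w i).

Lemma covarianceC u w : covariance u w = covariance w u.
Proof.
by rewrite /covariance mulrC; congr (_ - _); apply: eq_bigr => i _; rewrite mulrAC.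
Qed.

Lemma covariance0r u w : (forall i, w i = 0) -> covariance u w = 0.
Proof.
move=> w0; rewrite /covariance [X in _ * X]big1 ?mulr0 ?subr0 => [|i _].
  by rewrite big1 // => i _; rewrite w0 mulr0.
by rewrite w0 mulr0.
Qed.

Lemma covariance_pairwise u w :
  \sum_i \sum_j p i * p j * ((u i - u j) * (w i - w j)) = 2 * covariance u w.
Proof.
have row i : \sum_j p i * p j * ((u i - u j) * (w i - w j)) =
    p i * u i * w i - p i * u i * (\sum_j p j * w j)
    - p i * w i * (\sum_j p j * u j) + p i * (\sum_j p j * u j * w j).
  rewrite -[p i * u i * w i]mulr1 -p_sum1 !mulr_sumr -!sumrB -big_split.
  by apply: eq_bigr => j _ /=; ring.
under eq_bigr do rewrite row.
by rewrite big_split /= !sumrB -!mulr_suml p_sum1 mul1r /covariance; ring.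
Qed.

Lemma pairwise_weighted_sum_le (F : I -> I -> R) (w : I -> R) :
  (forall i, 0 <= w i) -> (forall i, F i i = 0) ->
  (forall i j, i != j -> F i j <= w i + w j) ->
  2 * \sum_i \sum_j p i * p j * F i j <= \sum_i w i.
Proof.
move=> w_ge0 Fii Fij; pose W := \sum_j p j * w j.
have row i : \sum_j p i * p j * F i j <= p i * w i + p i * W - 2 * p i ^+ 2 * w i.
  have -> : p i * w i + p i * W = \sum_j p i * p j * (w i + w j).
    rewrite (eq_bigr (fun j => p i * w i * p j + p i * (p j * w j))) => [|j _];
      last by ring.
    by rewrite big_split -!mulr_sumr p_sum1 mulr1.
  rewrite (bigD1 i) // [X in _ <= X - _](bigD1 i) //= Fii mulr0 add0r.
  have -> : p i * p i * (w i + w i) = 2 * p i ^+ 2 * w i by ring.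
  rewrite addrAC subrr add0r; apply: ler_sum => j ji.
  apply: ler_wpM2l; first exact: mulr_ge0.
  by apply: Fij; rewrite eq_sym.
have total : \sum_i (p i * w i + p i * W - 2 * p i ^+ 2 * w i) =
    \sum_i 2 * (p i * (1 - p i)) * w i.
  rewrite sumrB big_split /= -mulr_suml p_sum1 mul1r.
  rewrite [RHS](eq_bigr (fun i => 2 * (p i * w i) - 2 * p i ^+ 2 * w i)) => [|i _];
    last by ring.
  by rewrite sumrB -mulr_sumr /W; ring.
apply: le_trans (_ : 2 * \sum_i 2 * (p i * (1 - p i)) * w i <= _).
  by rewrite -total ler_wpM2l // ler_sum.
rewrite mulr_sumr; apply: ler_sum => i _; rewrite mulrA -[leRHS]mul1r.
by apply: ler_wpM2r => //; have := sqr_ge0 (2 * p i - 1); nra.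
Qed.

Lemma covariance_le_sqr (a b : R) u w :
  4 * a * b * covariance u w <= b ^+ 2 * \sum_i u i ^+ 2 + a ^+ 2 * \sum_i w i ^+ 2.
Proof.
rewrite !mulr_sumr -big_split /=.
have -> : 4 * a * b * covariance u w =
    2 * \sum_i \sum_j p i * p j * (a * b * ((u i - u j) * (w i - w j))).
  have -> : 4 * a * b * covariance u w = 2 * (a * b * (2 * covariance u w)) by ring.
  rewrite -covariance_pairwise mulr_sumr; congr (_ * _); apply: eq_bigr => i _.
  by rewrite mulr_sumr; apply: eq_bigr => j _; ring.
apply: pairwise_weighted_sum_le => [i|i|i j _].
- by rewrite addr_ge0 // mulr_ge0 // sqr_ge0.
- by rewrite !subrr !mulr0.
- have := sqr_ge0 (b * (u i - u j) - a * (w i - w j)).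
  have := mulr_ge0 (sqr_ge0 b) (sqr_ge0 (u i + u j)).
  have := mulr_ge0 (sqr_ge0 a) (sqr_ge0 (w i + w j)).
  nra.
Qed.
End Covariance.

Lemma covariance_le_norm (R : rcfType) (I : finType) (p : I -> R) :
  (forall i, 0 <= p i) -> \sum_i p i = 1 -> forall u w : I -> R,
  covariance p u w <= 2^-1 * Num.sqrt (\sum_i u i ^+ 2) * Num.sqrt (\sum_i w i ^+ 2).
Proof.
move=> p_ge0 p_sum1 u w.
have sqr_ge0_sum (v : I -> R) : 0 <= \sum_i v i ^+ 2.
  by apply: sumr_ge0 => i _; exact: sqr_ge0.
have norm_eq0 (v : I -> R) : Num.sqrt (\sum_i v i ^+ 2) = 0 -> forall i, v i = 0.
  move=> /eqP; rewrite sqrtr_eq0 => v_le0 i; apply/eqP; rewrite -sqrf_eq0; apply/eqP.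
  apply: (@psumr_eq0P _ _ xpredT _ (fun j _ => sqr_ge0 (v j))) => //.
  by apply/le_anti; rewrite v_le0 sqr_ge0_sum.
set A := Num.sqrt _; set B := Num.sqrt _.
have [A0|A_neq0] := eqVneq A 0.
  by rewrite covarianceC covariance0r ?A0 ?mulr0 ?mul0r //; exact: norm_eq0.
have [B0|B_neq0] := eqVneq B 0.
  by rewrite covariance0r ?B0 ?mulr0 //; exact: norm_eq0.
have AB_gt0 : 0 < A * B by rewrite mulr_gt0 // lt_def ?A_neq0 ?B_neq0 sqrtr_ge0.
have := covariance_le_sqr p_ge0 p_sum1 A B u w.
rewrite -[\sum_i u i ^+ 2]sqr_sqrtr ?sqr_ge0_sum //.
rewrite -[\sum_i w i ^+ 2]sqr_sqrtr ?sqr_ge0_sum // -/A -/B; nra.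
Qed.

Section Softmax.
Variables (R : realType) (K : nat).
Hypothesis K_gt0 : (0 < K)%N.

Lemma sum_expR_gt0 (f : 'I_K -> R) : 0 < \sum_j expR (f j).
Proof.
rewrite (bigD1 (Ordinal K_gt0)) //= ltr_pwDl ?expR_gt0 //.
by apply: sumr_ge0 => j _; exact: expR_ge0.
Qed.

Lemma softmax_ge0 (z : 'rV[R]_K) i : 0 <= softmax z 0 i.
Proof. by rewrite mxE divr_ge0 ?expR_ge0 // ltW ?sum_expR_gt0. Qed.

Lemma sum_softmax (z : 'rV[R]_K) : \sum_i softmax z 0 i = 1.
Proof.
under eq_bigr do rewrite mxE.
by rewrite -mulr_suml divff // lt0r_neq0 ?sum_expR_gt0.
Qed.

Lemma is_derive_softmax_line (y d : 'rV[R]_K) (i : 'I_K) (t : R) :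
  is_derive t 1 (fun s => softmax (y + s *: d) 0 i)
    (softmax (y + t *: d) 0 i * (d 0 i - \sum_j softmax (y + t *: d) 0 j * d 0 j)).
Proof.
pose e j s := expR (y 0 j + s * d 0 j).
pose S s := \sum_j e j s.
have sm j s : softmax (y + s *: d) 0 j = e j s / S s.
  by rewrite mxE /S; under eq_bigr do rewrite !mxE; rewrite !mxE.
have -> : (fun s => softmax (y + s *: d) 0 i) = (fun s => e i s * (S s)^-1).
  by apply/funext => s; exact: sm.
have de j : is_derive t 1 (e j) (e j t * d 0 j).
  apply: (is_derive1_comp (is_derive_expR _)).
  have aff := is_deriveD (is_derive_cst (y 0 j) t 1)
                         (is_deriveM (is_derive_id t 1) (is_derive_cst (d 0 j) t 1)).
  by rewrite /= scaler0 add0r scaler1 add0r in aff.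
have dS : is_derive t 1 S (\sum_j e j t * d 0 j).
  by have := is_derive_sum de; rewrite fct_sumE.
have S_neq0 : S t != 0 by rewrite lt0r_neq0 // /S; exact: sum_expR_gt0.
apply: (is_derive_eq (is_deriveM (de i) (is_deriveV S_neq0 dS))).
rewrite [softmax _ 0 i](sm i t).
rewrite [in RHS](eq_bigr (fun j => e j t * d 0 j / S t)) => [|j _]; last first.
  by rewrite [softmax _ 0 j](sm j t) mulrAC.
by rewrite -mulr_suml /GRing.scale /=; field.
Qed.

Lemma softmax_lipschitz (x y : 'rV[R]_K) :
  norm2 (softmax x - softmax y) <= 2^-1 * norm2 (x - y).
Proof.
set v := softmax x - softmax y; set d := x - y.
pose p (s : R) (i : 'I_K) : R := softmax (y + s *: d) 0 i.
pose g s := \sum_i v 0 i * p s i.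
have dg (s : R) : is_derive s 1 g (covariance (p s) (v 0) (d 0)).
  have := is_derive_sum (fun i => is_deriveM (is_derive_cst (v 0 i) s 1)
                                             (is_derive_softmax_line y d i s)).
  rewrite fct_sumE => /is_derive_eq; apply.
  rewrite /covariance mulr_suml -sumrB; apply: eq_bigr => i _.
  have scaleE (a b : R) : a *: b = a * b by [].
  by rewrite /= scaler0 addr0 scaleE /p /cst; ring.
have g_cont : {within `[0, 1], continuous g}.
  by apply: derivable_within_continuous => s _; case: (dg s).
have [c _ gc] := MVT_segment ler01 (fun s _ => dg s) g_cont.
have g10 : g 1 - g 0 = \sum_i v 0 i ^+ 2.
  rewrite /g /p scale1r scale0r addr0 [y + d]addrC /d subrK -sumrB.
  by apply: eq_bigr => i _; rewrite -mulrBr expr2 /v !mxE.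
have norm2_sqr (z : 'rV[R]_K) : norm2 z ^+ 2 = \sum_i z 0 i ^+ 2.
  by rewrite sqr_sqrtr // sumr_ge0 // => i _; exact: sqr_ge0.
have cov_le : norm2 v ^+ 2 <= 2^-1 * norm2 v * norm2 d.
  rewrite norm2_sqr -g10 gc subr0 mulr1.
  exact: (@covariance_le_norm _ _ (p c) (softmax_ge0 _) (sum_softmax _)).
have := sqrtr_ge0 (\sum_i v 0 i ^+ 2); have := sqrtr_ge0 (\sum_i d 0 i ^+ 2).
rewrite /norm2 in cov_le *; nra.
Qed.

End Softmax.

Theorem lemma6 (R : realType) (K : nat) (hK : (2 <= K)%N) :
  exists L_K : R, L_K <= (K.-1)%:R / K%:R /\
    forall x y : 'rV[R]_K,
      norm2 (softmax x - softmax y) <= L_K * norm2 (x - y).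
Proof.
exists 2^-1; split; last by move=> x y; apply: softmax_lipschitz; exact: ltnW.
case: K hK => [|[|k]] // _ /=.
rewrite ler_pdivlMr ?ltr0Sn // -[k.+2]addn2 -[k.+1]addn1 !natrD.
by have := ler0n R k; lra.
Qed.
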